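(* Let $\vec a\in\mathbb R^4\setminus\{0\}$, let $V\in\mathfrak X(\mathbb S^3)$ be the proper conformal vector field $V(p)=\vec a-\langle\vec a,p\rangle p$, let $q\neq0$, and let $\gamma\colon I\to\mathbb S^3$ be a curve parametrized by arc-length which is a conformal trajectory of $V$. Then there exist $a_1,a_2\in\mathbb R$ such that $$\langle\gamma(s),\vec a\rangle=a_1\cos s+a_2\sin s\quad\text{for all }s\in I.$$ If $\gamma$ is a geodesic, then $\gamma(s)=\cos(s)\,\vec v+\sin(s)\,\vec w$ for orthonormal vectors $\vec v,\vec w\in\mathbb R^4$ with $\vec a\in\operatorname{span}\{\vec v,\vec w\}$; that is, $\gamma$ is (an arc of) the great circle obtained by intersecting $\mathbb S^3$ with a $2$-plane through the origin containing $\vec a$. If $\gamma$ is not a geodesic, then its curvature is constant, $\kappa=|q|\sqrt{|\vec a|^2-(a_1^2+a_2^2)}$, and its torsion is $\tau(s)=-q\,(a_1\sin s-a_2\cos s)$.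
   Context: $\mathbb S^3=\{p\in\mathbb R^4:|p|=1\}$ with the metric induced by the Euclidean inner product $\langle\cdot,\cdot\rangle$ of $\mathbb R^4$; its Levi-Civita connection is $\nabla$, so for a unit-speed curve $\nabla_{\gamma'}\gamma'=\gamma''+\gamma$. The cross product of $u,v\in T_p\mathbb S^3$ is the unique $u\times v\in T_p\mathbb S^3$ with $\langle u\times v,w\rangle=\det(u,v,w,p)$ for all $w\in T_p\mathbb S^3$. For a fixed real $q\neq0$, a conformal trajectory of $V$ is a regular curve with $\nabla_{\gamma'}\gamma'=q\,V\times\gamma'$. Frenet frame of a non-geodesic unit-speed curve: $T=\gamma'$, $\nabla_TT=\kappa N$ with $\kappa>0$, $B=T\times N$, $\nabla_TN=-\kappa T+\tau B$, $\nabla_TB=-\tau N$; $\kappa$ is the curvature, $\tau$ the torsion. *)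

From HB Require Import structures.
From mathcomp Require Import all_boot all_order all_algebra.
From mathcomp Require Import all_classical all_reals all_analysis.
Set Implicit Arguments. Unset Strict Implicit. Unset Printing Implicit Defensive.
Import Order.TTheory GRing.Theory Num.Theory.
Import numFieldNormedType.Exports.
Local Open Scope ring_scope.
Local Open Scope classical_set_scope.

Section S3.
Variable R : realType.

Definition dot4 (u v : 'rV[R]_4) : R := \sum_(i < 4) u 0 i * v 0 i.

Definition norm4 (u : 'rV[R]_4) : R := Num.sqrt (dot4 u u).

Definition mat4 (u v w p : 'rV[R]_4) : 'M[R]_4 :=
  \matrix_(i < 4, j < 4) (nth 0 [:: u; v; w; p] i) 0 j.

(* cross product in T_p S^3: the vector whose k-th coordinate is
   det(u, v, e_k, p); equivalently the unique x with <x,p> = 0 and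
   <x, w> = det(u, v, w, p) for all w (by multilinearity of det). *)
Definition cross (p u v : 'rV[R]_4) : 'rV[R]_4 :=
  \row_(k < 4) \det (mat4 u v (delta_mx 0 k) p).

(* Levi-Civita covariant derivative of a vector field Y along the curve gam
   in S^3: tangential projection of the ambient derivative. *)
Definition covD (gam Y : R -> 'rV[R]_4) (s : R) : 'rV[R]_4 :=
  derive1 Y s - dot4 (derive1 Y s) (gam s) *: gam s.

Definition tangent (gam : R -> 'rV[R]_4) : R -> 'rV[R]_4 := derive1 gam.
Definition curvature (gam : R -> 'rV[R]_4) (s : R) : R :=
  norm4 (covD gam (tangent gam) s).
Definition normal (gam : R -> 'rV[R]_4) (s : R) : 'rV[R]_4 :=
  (curvature gam s)^-1 *: covD gam (tangent gam) s.
Definition binormal (gam : R -> 'rV[R]_4) (s : R) : 'rV[R]_4 :=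
  cross (gam s) (tangent gam s) (normal gam s).
Definition torsion (gam : R -> 'rV[R]_4) (s : R) : R :=
  dot4 (covD gam (normal gam) s) (binormal gam s).

Definition confV (a p : 'rV[R]_4) : 'rV[R]_4 := a - dot4 a p *: p.

End S3.

From HB Require Import structures.
From mathcomp Require Import all_boot all_order all_algebra.
From mathcomp Require Import all_classical all_reals all_analysis.
From mathcomp Require Import ring lra.
Import Order.TTheory GRing.Theory Num.Theory.
Import numFieldNormedType.Exports.
Set Implicit Arguments.
Unset Strict Implicit.
Unset Printing Implicit Defensive.
Local Open Scope ring_scope.
Local Open Scope classical_set_scope.

(* Write [T = gam'].  The cross product [V x T] is orthogonal to [V] and to [gam], which
   together span [a]; so the trajectory equation [gam'' + gam = q V x T] makes
   [gam'' + gam] orthogonal to [a], i.e. [f s = <gam s, a>] solves [f'' = - f] and is a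
   combination of [cos] and [sin].  Lagrange's identity gives
   [|V x T|^2 = |a|^2 - f^2 - f'^2 = |a|^2 - (a1^2 + a2^2)], a constant, whence the
   curvature.  For a geodesic [gam'' = - gam], so [gam] is a great circle, and [V x T = 0]
   puts [a] in the span of [gam] and [T].  Otherwise, differentiating the orthogonality
   relations of the unit normal [N] shows that [N' + kappa T] is orthogonal to [gam], [T]
   and [N], hence a multiple [tau B] of the binormal; pairing with [V] gives [tau = q f']. *)

Section Det4Expansion.
Variables (R : comPzRingType) (m : nat -> nat -> R).

Definition minor2 r0 r1 c0 c1 := m r0 c0 * m r1 c1 - m r0 c1 * m r1 c0.
Definition minor3 r0 r1 r2 c0 c1 c2 :=
  m r0 c0 * minor2 r1 r2 c1 c2 - m r0 c1 * minor2 r1 r2 c0 c2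
  + m r0 c2 * minor2 r1 r2 c0 c1.
Definition det4_laplace :=
  m 0 0 * minor3 1 2 3 1 2 3 - m 0 1 * minor3 1 2 3 0 2 3
  + m 0 2 * minor3 1 2 3 0 1 3 - m 0 3 * minor3 1 2 3 0 1 2.

Lemma det4_laplaceE : \det (\matrix_(i < 4, j < 4) m i j) = det4_laplace.
Proof.
do 3 (rewrite ?det_mx11; rewrite !(expand_det_row _ 0) !big_ord_recl !big_ord0 /cofactor).
by rewrite !det_mx11 !mxE /det4_laplace /minor3 /minor2 /bump /=; ring.
Qed.

End Det4Expansion.

Section Dot4.
Variable R : realType.
Implicit Types u v w p x : 'rV[R]_4.

Lemma dot4E u v : dot4 u v = u 0 (inord 0) * v 0 (inord 0) + u 0 (inord 1) * v 0 (inord 1)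
  + u 0 (inord 2) * v 0 (inord 2) + u 0 (inord 3) * v 0 (inord 3).
Proof.
rewrite /dot4 !big_ord_recl big_ord0 addr0 !addrA.
by congr (_ + _ + _ + _); congr (u 0 _ * v 0 _); apply: val_inj; rewrite /= inordK.
Qed.

Lemma rowv4P u v : (forall k, (k < 4)%N -> u 0 (inord k) = v 0 (inord k)) -> u = v.
Proof. by move=> uv; apply/rowP => j; rewrite -(inord_val j); apply/uv/ltn_ord. Qed.

Lemma dot4C u v : dot4 u v = dot4 v u.
Proof. by rewrite !dot4E; ring. Qed.
Lemma dot4Dl u v w : dot4 (u + v) w = dot4 u w + dot4 v w.
Proof. by rewrite !dot4E !mxE; ring. Qed.
Lemma dot4Nl u w : dot4 (- u) w = - dot4 u w.
Proof. by rewrite !dot4E !mxE; ring. Qed.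
Lemma dot4Zl (c : R) u w : dot4 (c *: u) w = c * dot4 u w.
Proof. by rewrite !dot4E !mxE; ring. Qed.
Lemma dot4Dr u v w : dot4 w (u + v) = dot4 w u + dot4 w v.
Proof. by rewrite !dot4E !mxE; ring. Qed.
Lemma dot4Nr u w : dot4 w (- u) = - dot4 w u.
Proof. by rewrite !dot4E !mxE; ring. Qed.
Lemma dot4Zr (c : R) u w : dot4 w (c *: u) = c * dot4 w u.
Proof. by rewrite !dot4E !mxE; ring. Qed.
Lemma dot40r u : dot4 u 0 = 0.
Proof. by rewrite !dot4E !mxE; ring. Qed.

Lemma dot4_ge0 u : 0 <= dot4 u u.
Proof. by rewrite dot4E; nra. Qed.

Lemma dot4_eq0 u : dot4 u u = 0 -> u = 0.
Proof.
rewrite dot4E => u0; apply: rowv4P => k; rewrite mxE.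
by case: k => [|[|[|[|k]]]] // _; nra.
Qed.

Lemma norm4_eq0 u : (norm4 u == 0) = (u == 0).
Proof.
rewrite /norm4 sqrtr_eq0 le_eqVlt ltNge dot4_ge0 orbF.
by apply/eqP/eqP => [/dot4_eq0|->]; last rewrite dot40r.
Qed.

End Dot4.

Ltac dot4_lin := rewrite ?(dot4Dl, dot4Dr, dot4Nl, dot4Nr, dot4Zl, dot4Zr).

Section Cross.
Variable R : realType.
Implicit Types u v w p x : 'rV[R]_4.

Lemma det_mat4E u v w p : \det (mat4 u v w p) =
  det4_laplace (fun i j => (nth 0 [:: u; v; w; p] i) 0 (inord j)).
Proof.
rewrite -det4_laplaceE; congr (\det _); apply/matrixP => i j.
by rewrite !mxE inord_val.
Qed.

Lemma inord4_eq (i j : nat) : (i < 4)%N -> (j < 4)%N ->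
  (inord i == inord j :> 'I_4) = (i == j).
Proof.
move=> lti ltj; apply/eqP/eqP => [ij|->//].
by rewrite -(inordK lti) -(inordK ltj) ij.
Qed.

Lemma dot4_cross p u v x : dot4 (cross p u v) x = \det (mat4 u v x p).
Proof.
rewrite dot4E !mxE !det_mat4E /det4_laplace /minor3 /minor2 /= !mxE !inord4_eq //=.
ring.
Qed.

Lemma dot4_cross_cyc p u v w : dot4 (cross p u v) w = dot4 (cross p v w) u.
Proof. by rewrite !dot4_cross !det_mat4E /det4_laplace /minor3 /minor2 /=; ring. Qed.

Lemma dot4_crossl p u v : dot4 (cross p u v) u = 0.
Proof. by rewrite dot4_cross det_mat4E /det4_laplace /minor3 /minor2 /=; ring. Qed.

Lemma dot4_crossp p u v : dot4 (cross p u v) p = 0.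
Proof. by rewrite dot4_cross det_mat4E /det4_laplace /minor3 /minor2 /=; ring. Qed.

Lemma dot4_cross_cross p u v : dot4 (cross p u v) (cross p u v) =
  dot4 u u * dot4 v v * dot4 p p + 2 * dot4 u v * dot4 v p * dot4 p u
  - dot4 u u * dot4 v p ^+ 2 - dot4 v v * dot4 p u ^+ 2 - dot4 p p * dot4 u v ^+ 2.
Proof.
rewrite dot4_cross det_mat4E /det4_laplace /minor3 /minor2 /= !mxE !det_mat4E.
rewrite /det4_laplace /minor3 /minor2 /= !mxE !inord4_eq //= !dot4E.
ring.
Qed.

Lemma det_mat4_sqr u v w p : \det (mat4 u v w p) ^+ 2 =
  det4_laplace (fun i j => dot4 (nth 0 [:: u; v; w; p] i) (nth 0 [:: u; v; w; p] j)).
Proof.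
rewrite expr2 -{2}det_tr -det_mulmx -det4_laplaceE.
congr (\det _); apply/matrixP => i j; rewrite !mxE /dot4.
by apply: eq_bigr => k _; rewrite !mxE.
Qed.

End Cross.

Section Frame.
Variable R : realType.
Variables g t n : 'rV[R]_4.
Hypotheses (gg : dot4 g g = 1) (tt : dot4 t t = 1) (nn : dot4 n n = 1).
Hypotheses (gt : dot4 g t = 0) (gn : dot4 g n = 0) (tn : dot4 t n = 0).

Lemma cross_orthonormal_unit : dot4 (cross g t n) (cross g t n) = 1.
Proof. by rewrite dot4_cross_cross gg tt nn tn dot4C gn gt; ring. Qed.

Lemma orthogonal_complement_cross W :
  dot4 W g = 0 -> dot4 W t = 0 -> dot4 W n = 0 ->
  W = dot4 W (cross g t n) *: cross g t n.
Proof.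
move=> Wg Wt Wn.
(* Gram determinant of [(t, n, W, g)]. *)
have tau2 : dot4 W (cross g t n) ^+ 2 = dot4 W W.
  rewrite dot4C dot4_cross det_mat4_sqr /det4_laplace /minor3 /minor2 /=.
  rewrite (dot4C n W) (dot4C g W) (dot4C t W) (dot4C n t) (dot4C n g) (dot4C t g).
  by rewrite gg tt nn gt gn tn Wg Wt Wn; ring.
apply/eqP; rewrite -subr_eq0; apply/eqP/dot4_eq0.
by dot4_lin; rewrite (dot4C (cross g t n) W) cross_orthonormal_unit -tau2; ring.
Qed.

Lemma dot4_cross_confV a :
  dot4 (cross g (confV a g) t) (cross g (confV a g) t) =
  dot4 a a - dot4 g a ^+ 2 - dot4 t a ^+ 2.
Proof.
rewrite dot4_cross_cross /confV; dot4_lin.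
rewrite (dot4C t g) (dot4C a g) (dot4C a t) gg tt gt; ring.
Qed.

Lemma cross_confV_eq0 a : cross g (confV a g) t = 0 ->
  a = dot4 g a *: g + dot4 t a *: t.
Proof.
move=> cross0; have := dot4_cross_confV a; rewrite cross0 dot40r => norm_a.
apply/eqP; rewrite -subr_eq0; apply/eqP/dot4_eq0.
dot4_lin; rewrite (dot4C t g) (dot4C a g) (dot4C a t) gg tt gt.
have -> : dot4 a a = dot4 g a ^+ 2 + dot4 t a ^+ 2 by lra.
ring.
Qed.

(* [N'] plays the derivative of the unit normal [n] along a conformal trajectory of
   curvature [K]; the torsion is read off [N' + K t], which is orthogonal to [g, t, n]. *)
Lemma torsion_frame N' a (q K : R) : K != 0 ->
  K *: n = q *: cross g (confV a g) t ->
  dot4 N' g = 0 -> dot4 N' n = 0 -> dot4 N' t = - K -> dot4 N' a = 0 ->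
  dot4 (N' - dot4 N' g *: g) (cross g t n) = q * dot4 t a.
Proof.
move=> K0 Kn N'g N'n N't N'a.
set B := cross g t n; set W := N' + K *: t.
have W_B : W = dot4 W B *: B.
  apply: orthogonal_complement_cross; rewrite /W; dot4_lin.
  - by rewrite N'g (dot4C t g) gt; ring.
  - by rewrite N't tt; ring.
  - by rewrite N'n tn; ring.
have BV : q * dot4 B (confV a g) = K.
  have := congr1 (fun v => dot4 v n) Kn; rewrite !dot4Zl nn mulr1 => ->.
  by rewrite (dot4_cross_cyc g (confV a g)).
have WV : dot4 W (confV a g) = K * dot4 t a.
  by rewrite /W /confV; dot4_lin; rewrite N'a N'g (dot4C t g) gt; ring.
have tau : dot4 W B = q * dot4 t a.
  have WV' : dot4 W (confV a g) = dot4 W B * dot4 B (confV a g).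
    by rewrite {1}W_B dot4Zl.
  by apply: (mulIf K0); rewrite -{1}BV mulrCA -WV' WV; ring.
have -> : N' = W - K *: t by rewrite /W addrK.
have tB : dot4 t B = 0 by rewrite dot4C dot4_crossl.
have gB : dot4 g B = 0 by rewrite dot4C dot4_crossp.
by clearbody W; dot4_lin; rewrite tau tB gB; ring.
Qed.

End Frame.

Section Calculus.
Variable R : realType.
Implicit Types (I : set R) (h phi psi : R -> R).

Lemma is_derive_coord m n (f : R -> 'M[R]_(m, n)) s i j : derivable f s 1 ->
  is_derive s 1 (fun x => f x i j) (derive1 f s i j).
Proof.
move=> df; have /derivableP := (derivable_mxP f s 1).1 df i j.
by rewrite derive1E derive_mx // mxE.
Qed.

Lemma is_derive_dot4 (f g : R -> 'rV[R]_4) s :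
  derivable f s 1 -> derivable g s 1 ->
  is_derive s 1 (fun x => dot4 (f x) (g x))
    (dot4 (derive1 f s) (g s) + dot4 (f s) (derive1 g s)).
Proof.
move=> df dg.
have -> : (fun x => dot4 (f x) (g x)) =
    \sum_(i < 4) ((fun x => f x 0 i) * (fun x => g x 0 i)).
  by rewrite fct_sumE; apply/funext => x; rewrite /dot4.
apply: is_derive_eq.
  by apply: is_derive_sum => i; apply: is_deriveM; apply: is_derive_coord.
rewrite /dot4 -big_split /=; apply: eq_bigr => i _.
by rewrite addrC; congr (_ + _); apply: mulrC.
Qed.

Lemma is_derive_cst_in I h c s d : open I -> I s ->
  (forall x, I x -> h x = c) -> is_derive s 1 h d -> d = 0.
Proof.
move=> oI Is hc [_ <-].
rewrite (@near_eq_derive _ _ _ h (cst c)) ?derive_cst //.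
by apply: filterS (oI s Is) => x /hc.
Qed.

Lemma derive_dot4_cst I (f g : R -> 'rV[R]_4) c s : open I -> I s ->
  derivable f s 1 -> derivable g s 1 -> (forall x, I x -> dot4 (f x) (g x) = c) ->
  dot4 (derive1 f s) (g s) + dot4 (f s) (derive1 g s) = 0.
Proof. by move=> oI Is df dg fg; apply: is_derive_cst_in oI Is fg (is_derive_dot4 df dg). Qed.

Lemma is_derive0_cst_in I h x y : is_interval I ->
  (forall s, I s -> is_derive s 1 h 0) -> I x -> I y -> h x = h y.
Proof.
move=> iI dh.
wlog xy : x y / x <= y.
  by move=> cst_le Ix Iy; case: (leP x y) => [|/ltW] xy; [|symmetry]; apply: cst_le.
move=> Ix Iy; have sub z : z \in `[x, y]%R -> I z.
  by rewrite in_itv /= => /andP[xz zy]; apply: (iI x y); rewrite ?xz.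
have ch : {within `[x, y], continuous h}.
  apply: derivable_within_continuous => z /sub Iz.
  by have [] := dh z Iz.
have [z _] := MVT_segment xy (fun z zxy => dh z (sub z (subset_itv_oo_cc zxy))) ch.
by rewrite mul0r => /eqP; rewrite subr_eq0 => /eqP.
Qed.

(* Energy argument: [phi ^+ 2 + psi ^+ 2] is constant, hence zero. *)
Lemma harmonic_eq0 I phi psi s0 : is_interval I -> I s0 ->
  (forall s, I s -> is_derive s 1 phi (psi s)) ->
  (forall s, I s -> is_derive s 1 psi (- phi s)) ->
  phi s0 = 0 -> psi s0 = 0 -> forall s, I s -> phi s = 0 /\ psi s = 0.
Proof.
move=> iI Is0 dphi dpsi phi0 psi0 s Is.
pose E x := phi x ^+ 2 + psi x ^+ 2.
have dE x : I x -> is_derive x 1 E 0.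
  move=> Ix; have := dphi x Ix; have := dpsi x Ix => dpsix dphix.
  by apply: is_derive_eq; rewrite /GRing.scale /=; ring.
have := is_derive0_cst_in iI dE Is Is0; rewrite /E phi0 psi0 expr0n /= addr0.
by move=> E0; split; nra.
Qed.

Lemma harmonic_solution I (f g : R -> R) s0 : is_interval I -> I s0 ->
  (forall s, I s -> is_derive s 1 f (g s)) ->
  (forall s, I s -> is_derive s 1 g (- f s)) ->
  let a1 := f s0 * cos s0 - g s0 * sin s0 in
  let a2 := f s0 * sin s0 + g s0 * cos s0 in
  forall s, I s ->
    f s = a1 * cos s + a2 * sin s /\ g s = - a1 * sin s + a2 * cos s.
Proof.
move=> iI Is0 df dg a1 a2 s Is.
have dphi x : I x -> is_derive x 1 (fun y => f y - (a1 * cos y + a2 * sin y))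
   (g x - (- a1 * sin x + a2 * cos x)).
  move=> Ix; have := df x Ix => dfx.
  by apply: is_derive_eq; rewrite /GRing.scale /=; ring.
have dpsi x : I x -> is_derive x 1 (fun y => g y - (- a1 * sin y + a2 * cos y))
   (- (f x - (a1 * cos x + a2 * sin x))).
  move=> Ix; have := dg x Ix => dgx.
  by apply: is_derive_eq; rewrite /GRing.scale /=; ring.
have pyth := cos2Dsin2 s0.
have phi0 : f s0 - (a1 * cos s0 + a2 * sin s0) = 0.
  transitivity (f s0 * (1 - (cos s0 ^+ 2 + sin s0 ^+ 2))); first by rewrite /a1 /a2; ring.
  by rewrite pyth subrr mulr0.
have psi0 : g s0 - (- a1 * sin s0 + a2 * cos s0) = 0.
  transitivity (g s0 * (1 - (cos s0 ^+ 2 + sin s0 ^+ 2))); first by rewrite /a1 /a2; ring.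
  by rewrite pyth subrr mulr0.
have [] := harmonic_eq0 iI Is0 dphi dpsi phi0 psi0 Is.
by move=> /eqP; rewrite subr_eq0 => /eqP -> /eqP; rewrite subr_eq0 => /eqP.
Qed.

End Calculus.

Section Rotation.
Variable R : realType.
Variables (g t : 'rV[R]_4) (c s : R).
Hypothesis pyth : c ^+ 2 + s ^+ 2 = 1.

Lemma rotation_orthonormal : dot4 g g = 1 -> dot4 t t = 1 -> dot4 g t = 0 ->
  [/\ dot4 (c *: g - s *: t) (c *: g - s *: t) = 1,
      dot4 (s *: g + c *: t) (s *: g + c *: t) = 1 &
      dot4 (c *: g - s *: t) (s *: g + c *: t) = 0].
Proof.
move=> gg tt gt; rewrite -pyth; dot4_lin; rewrite (dot4C t g) gg tt gt.
by split; ring.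
Qed.

Lemma rotation_span (x y : R) : x *: g + y *: t =
  (x * c - y * s) *: (c *: g - s *: t) + (x * s + y * c) *: (s *: g + c *: t).
Proof.
transitivity ((x * (c ^+ 2 + s ^+ 2)) *: g + (y * (c ^+ 2 + s ^+ 2)) *: t).
  by rewrite pyth !mulr1.
by apply/rowP => k; rewrite !mxE; ring.
Qed.

End Rotation.

Section ConformalTrajectory.
Variables (R : realType) (a : 'rV[R]_4) (q : R) (I : set R) (gam : R -> 'rV[R]_4).
Hypotheses (I_itv : is_interval I) (I_open : open I).
Hypothesis gam_smooth :
  forall (n : nat) (s : R), I s -> derivable (iter n (@derive1 R _) gam) s 1.
Hypothesis gam_sphere : forall s, I s -> dot4 (gam s) (gam s) = 1.
Hypothesis gam_unit : forall s, I s -> dot4 (derive1 gam s) (derive1 gam s) = 1.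
Hypothesis gam_traj : forall s, I s ->
  covD gam (tangent gam) s = q *: cross (gam s) (confV a (gam s)) (derive1 gam s).

Local Notation gam' := (derive1 gam).
Local Notation gam'' := (derive1 (derive1 gam)).

Lemma derivable_gam s : I s -> derivable gam s 1.
Proof. exact: gam_smooth 0%N s. Qed.
Lemma derivable_gam' s : I s -> derivable gam' s 1.
Proof. exact: gam_smooth 1%N s. Qed.
Lemma derivable_gam'' s : I s -> derivable gam'' s 1.
Proof. exact: gam_smooth 2%N s. Qed.

Lemma dot4_gam_gam' s : I s -> dot4 (gam s) (gam' s) = 0.
Proof.
move=> Is; have := derive_dot4_cst I_open Is (derivable_gam Is) (derivable_gam Is) gam_sphere.
by rewrite (dot4C (gam' s)); lra.
Qed.

Lemma dot4_gam'_gam'' s : I s -> dot4 (gam' s) (gam'' s) = 0.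
Proof.
move=> Is; have := derive_dot4_cst I_open Is (derivable_gam' Is) (derivable_gam' Is) gam_unit.
by rewrite (dot4C (gam'' s)); lra.
Qed.

Lemma dot4_gam_gam'' s : I s -> dot4 (gam s) (gam'' s) = -1.
Proof.
move=> Is; have := derive_dot4_cst I_open Is (derivable_gam Is) (derivable_gam' Is) dot4_gam_gam'.
by rewrite gam_unit //; lra.
Qed.

Lemma covD_tangentE s : I s -> covD gam (tangent gam) s = gam'' s + gam s.
Proof. by move=> Is; rewrite /covD /tangent dot4C dot4_gam_gam'' // scaleN1r opprK. Qed.

Lemma gam''_traj s : I s ->
  gam'' s + gam s = q *: cross (gam s) (confV a (gam s)) (gam' s).
Proof. by move=> Is; rewrite -covD_tangentE // gam_traj. Qed.

Lemma dot4_gam''_a s : I s -> dot4 (gam'' s + gam s) a = 0.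
Proof.
move=> Is; have -> : a = confV a (gam s) + dot4 a (gam s) *: gam s by rewrite /confV subrK.
by rewrite gam''_traj // dot4Zl dot4Dr dot4Zr dot4_crossl dot4_crossp; ring.
Qed.

Lemma is_derive_height s : I s ->
  is_derive s 1 (fun x => dot4 (gam x) a) (dot4 (gam' s) a).
Proof.
move=> Is; have := is_derive_dot4 (derivable_gam Is) (derivable_cst a s 1).
by rewrite derive1_cst dot40r addr0.
Qed.

Lemma is_derive_slope s : I s ->
  is_derive s 1 (fun x => dot4 (gam' x) a) (- dot4 (gam s) a).
Proof.
move=> Is; have := is_derive_dot4 (derivable_gam' Is) (derivable_cst a s 1).
rewrite derive1_cst dot40r addr0 => d; apply: is_derive_eq d _.
by have := dot4_gam''_a Is; rewrite dot4Dl; lra.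
Qed.

Variable s0 : R.
Hypothesis I_s0 : I s0.

Definition coef_cos := dot4 (gam s0) a * cos s0 - dot4 (gam' s0) a * sin s0.
Definition coef_sin := dot4 (gam s0) a * sin s0 + dot4 (gam' s0) a * cos s0.

Lemma height_slopeE s : I s ->
  dot4 (gam s) a = coef_cos * cos s + coef_sin * sin s /\
  dot4 (gam' s) a = - coef_cos * sin s + coef_sin * cos s.
Proof. exact: harmonic_solution I_itv I_s0 is_derive_height is_derive_slope s. Qed.

Lemma geodesic_great_circle : q != 0 ->
  (forall s, I s -> covD gam (tangent gam) s = 0) ->
  exists v w : 'rV[R]_4,
    [/\ dot4 v v = 1, dot4 w w = 1, dot4 v w = 0,
        (exists c1 c2 : R, a = c1 *: v + c2 *: w) &
        forall s, I s -> gam s = cos s *: v + sin s *: w].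
Proof.
move=> q0 geodesic.
have gam''E x : I x -> gam'' x = - gam x.
  by move=> Ix; apply/eqP; rewrite -addr_eq0 -covD_tangentE // geodesic.
have pyth := cos2Dsin2 s0.
have [vv ww vw] := rotation_orthonormal pyth (gam_sphere I_s0) (gam_unit I_s0)
  (dot4_gam_gam' I_s0).
exists (cos s0 *: gam s0 - sin s0 *: gam' s0), (sin s0 *: gam s0 + cos s0 *: gam' s0).
split => //.
  exists coef_cos, coef_sin.
  have cross0 : cross (gam s0) (confV a (gam s0)) (gam' s0) = 0.
    have /esym/eqP := gam''_traj I_s0; rewrite -covD_tangentE // geodesic //.
    by rewrite scaler_eq0 (negPf q0) => /eqP.
  rewrite {1}(cross_confV_eq0 (gam_sphere I_s0) (gam_unit I_s0) (dot4_gam_gam' I_s0) cross0).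
  exact: rotation_span.
move=> s Is; apply/rowP => k; rewrite !mxE.
have d_coord x : I x -> is_derive x 1 (fun y => gam y 0 k) (gam' x 0 k).
  by move=> Ix; apply/is_derive_coord/derivable_gam.
have d_coord' x : I x -> is_derive x 1 (fun y => gam' y 0 k) (- gam x 0 k).
  move=> Ix; have := is_derive_coord 0 k (derivable_gam' Ix).
  by rewrite gam''E // mxE.
by have [-> _] := harmonic_solution I_itv I_s0 d_coord d_coord' Is; ring.
Qed.

Lemma dot4_cross_traj s : I s ->
  dot4 (cross (gam s) (confV a (gam s)) (gam' s)) (cross (gam s) (confV a (gam s)) (gam' s))
  = dot4 a a - (coef_cos ^+ 2 + coef_sin ^+ 2).
Proof.
move=> Is; rewrite (dot4_cross_confV (gam_sphere Is) (gam_unit Is) (dot4_gam_gam' Is)).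
have [-> ->] := height_slopeE Is; have pyth := cos2Dsin2 s.
transitivity (dot4 a a - (coef_cos ^+ 2 + coef_sin ^+ 2) * (cos s ^+ 2 + sin s ^+ 2)).
  by ring.
by rewrite pyth mulr1.
Qed.

Lemma curvatureE s : I s ->
  curvature gam s = `|q| * Num.sqrt (dot4 a a - (coef_cos ^+ 2 + coef_sin ^+ 2)).
Proof.
move=> Is; rewrite /curvature /norm4 gam_traj // dot4Zl dot4Zr dot4_cross_traj //.
by rewrite mulrA -expr2 sqrtrM ?sqr_ge0 // sqrtr_sqr.
Qed.

Let K := curvature gam s0.
Hypothesis K_neq0 : K != 0.

Lemma curvature_cst s : I s -> curvature gam s = K.
Proof. by move=> Is; rewrite /K !curvatureE. Qed.

Lemma scale_normal s : I s -> K *: normal gam s = gam'' s + gam s.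
Proof. by move=> Is; rewrite /normal curvature_cst // scalerA divff // scale1r covD_tangentE. Qed.

Lemma normalE s : I s -> normal gam s = K^-1 *: (gam'' s + gam s).
Proof. by move=> Is; rewrite -scale_normal // scalerA mulVf // scale1r. Qed.

Lemma dot4_curvature_vector s : I s ->
  dot4 (gam'' s + gam s) (gam'' s + gam s) = K ^+ 2.
Proof.
move=> Is; have := curvature_cst Is; rewrite /curvature /norm4 covD_tangentE // => <-.
by rewrite sqr_sqrtr // dot4_ge0.
Qed.

Lemma dot4_normal_normal s : I s -> dot4 (normal gam s) (normal gam s) = 1.
Proof.
move=> Is; rewrite normalE // dot4Zl dot4Zr dot4_curvature_vector //.
by rewrite mulrA -expr2 exprVn mulVf // expf_neq0.
Qed.

Lemma dot4_normal_gam s : I s -> dot4 (normal gam s) (gam s) = 0.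
Proof.
move=> Is; rewrite normalE // dot4Zl dot4Dl dot4C dot4_gam_gam'' // gam_sphere //.
by rewrite addNr mulr0.
Qed.

Lemma dot4_normal_gam' s : I s -> dot4 (normal gam s) (gam' s) = 0.
Proof.
move=> Is; rewrite normalE // dot4Zl dot4Dl dot4C dot4_gam'_gam'' // dot4_gam_gam' //.
by rewrite addr0 mulr0.
Qed.

Lemma dot4_normal_gam'' s : I s -> dot4 (normal gam s) (gam'' s) = K.
Proof.
move=> Is; have := congr1 (dot4 (normal gam s)) (scale_normal Is).
rewrite dot4Zr dot4_normal_normal // mulr1 dot4Dr dot4_normal_gam // addr0.
by move=> <-.
Qed.

Lemma dot4_normal_a s : I s -> dot4 (normal gam s) a = 0.
Proof. by move=> Is; rewrite normalE // dot4Zl dot4_gam''_a // mulr0. Qed.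

Lemma derivable_normal s : I s -> derivable (normal gam) s 1.
Proof.
move=> Is; apply: (@near_eq_derivable _ _ _ (K^-1 *: (gam'' + gam))).
  by apply: filterS (I_open Is) => x Ix; rewrite normalE.
by apply/derivableZ/derivableD; [apply: derivable_gam'' | apply: derivable_gam].
Qed.

Lemma torsionE s : I s -> torsion gam s = q * dot4 (gam' s) a.
Proof.
move=> Is; set N' := derive1 (normal gam) s.
have dn := derivable_normal Is.
have N'g : dot4 N' (gam s) = 0.
  have := derive_dot4_cst I_open Is dn (derivable_gam Is) dot4_normal_gam.
  by rewrite dot4_normal_gam' // addr0.
have N'n : dot4 N' (normal gam s) = 0.
  have := derive_dot4_cst I_open Is dn dn dot4_normal_normal.
  by rewrite (dot4C (normal gam s)); lra.
have N't : dot4 N' (gam' s) = - K.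
  have := derive_dot4_cst I_open Is dn (derivable_gam' Is) dot4_normal_gam'.
  by rewrite dot4_normal_gam'' //; lra.
have N'a : dot4 N' a = 0.
  have := derive_dot4_cst I_open Is dn (derivable_cst a s 1) dot4_normal_a.
  by rewrite derive1_cst dot40r addr0.
rewrite /torsion /covD /binormal /tangent.
apply: torsion_frame N'g N'n N't N'a; rewrite ?gam_sphere ?gam_unit ?dot4_normal_normal //.
- exact: dot4_gam_gam'.
- by rewrite dot4C dot4_normal_gam.
- by rewrite dot4C dot4_normal_gam'.
- by rewrite scale_normal // gam''_traj.
Qed.

End ConformalTrajectory.

Theorem theorem2 (R : realType) (a : 'rV[R]_4) (q : R)
    (I : set R) (gam : R -> 'rV[R]_4) :
  a != 0 -> q != 0 ->
  is_interval I -> open I -> I !=set0 ->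
  (forall (n : nat) (s : R), I s -> derivable (iter n (@derive1 R _) gam) s 1) ->
  (forall s, I s -> dot4 (gam s) (gam s) = 1) ->
  (forall s, I s -> dot4 (derive1 gam s) (derive1 gam s) = 1) ->
  (forall s, I s ->
     covD gam (tangent gam) s = q *: cross (gam s) (confV a (gam s)) (derive1 gam s)) ->
  exists a1 a2 : R,
    (forall s, I s -> dot4 (gam s) a = a1 * cos s + a2 * sin s) /\
    ((forall s, I s -> covD gam (tangent gam) s = 0) ->
       exists v w : 'rV[R]_4,
         [/\ dot4 v v = 1, dot4 w w = 1, dot4 v w = 0,
             (exists c1 c2 : R, a = c1 *: v + c2 *: w) &
             forall s, I s -> gam s = cos s *: v + sin s *: w]) /\
    ((exists s, I s /\ covD gam (tangent gam) s != 0) ->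
       forall s, I s ->
         curvature gam s = `|q| * Num.sqrt (dot4 a a - (a1 ^+ 2 + a2 ^+ 2)) /\
         torsion gam s = - q * (a1 * sin s - a2 * cos s)).
Proof.
move=> _ q0 I_itv I_open [s0 Is0] smooth sphere unit traj.
have harmonic := height_slopeE I_itv I_open smooth sphere unit traj Is0.
exists (coef_cos a gam s0), (coef_sin a gam s0).
split; first by move=> s /harmonic [].
split; first exact: (geodesic_great_circle I_itv I_open smooth sphere unit traj Is0 q0).
move=> [s1 [Is1 nongeodesic]] s Is.
have K0 : curvature gam s0 != 0.
  by rewrite -(curvature_cst I_itv I_open smooth sphere unit traj Is0 Is1) /curvature norm4_eq0.
split; first exact: (curvatureE I_itv I_open smooth sphere unit traj Is0 Is).
rewrite (torsionE I_itv I_open smooth sphere unit traj Is0 K0 Is).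
by have [_ ->] := harmonic s Is; ring.
Qed.
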